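(* Let $G=K_{s}^{t}$ with $3\leq t+1\leq s$ and $n=s+t$. Then $\lambda_{2}(D(G))=\sqrt{2}-2$.
   Context: $D(G)$ is the distance matrix of $G$, with eigenvalues $\lambda_{1}(D(G))\geq\lambda_{2}(D(G))\geq\cdots$. $K_{s}^{t}$ denotes the graph on $n=s+t$ vertices obtained from the complete graph $K_s$ by attaching a pendant edge (a new vertex of degree 1) to each of $t$ distinct vertices of $K_s$. *)

From mathcomp Require Import all_boot all_order all_algebra.
Set Implicit Arguments. Unset Strict Implicit. Unset Printing Implicit Defensive.
Import Order.TTheory GRing.Theory Num.Theory.

(* Simple graphs are symmetric irreflexive relations on a finType. *)

Fixpoint reach (T : finType) (e : rel T) (k : nat) (u v : T) : bool :=
  match k with
  | 0 => u == v
  | k'.+1 => reach e k' u v || [exists w, reach e k' u w && e w v]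
  end.

(* graph distance: least k with a walk of length k from u to v
   (correct for connected graphs; every distance is < #|T|) *)
Definition gdist (T : finType) (e : rel T) (u v : T) : nat :=
  find (fun k => reach e k u v) (iota 0 #|T|).

(* K_s^t on vertices 'I_(s+t): vertices 0..s-1 form K_s, and the vertex
   s+j (j < t) is a pendant vertex attached to vertex j. *)
Definition Kst_adj (s t : nat) : rel 'I_(s + t) :=
  fun i j =>
    (i != j) &&
    [|| (i < s) && (j < s),
        (i < s) && (s <= j) && (j == i + s :> nat)
      | (j < s) && (s <= i) && (i == j + s :> nat)].

Arguments Kst_adj : clear implicits.

Local Open Scope ring_scope.

Definition dist_mx_ord (R : nzRingType) (n : nat) (e : rel 'I_n) : 'M[R]_n :=
  \matrix_(i, j) (gdist e i j)%:R.

(* r is the list of eigenvalues of A (with multiplicity) in nonincreasing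
   order: lambda_1 = r`_0 >= lambda_2 = r`_1 >= ... *)
Definition eigen_seq (R : numDomainType) (n : nat) (A : 'M[R]_n) (r : seq R) :=
  sorted >=%R r /\ char_poly A = \prod_(x <- r) ('X - x%:P).

(* Listing the clique first, D(K_s^t) = [[J - I, 2J - P], [2J - P^T, 3J - 3I]]
   with P = [I_t; 0].  A Schur complement and the identity
   det(uI + vJ) = u^m (1 + m v / u) give
     det(xI - D) = (x^2 + 4x + 2)^(t-1) (x + 1)^(s-t-1) c(x)
   for a monic cubic c with c(-M) < 0 < c(-1) = s - t and c(sqrt 2 - 2) < 0 < c(K)
   (M, K large).  So c has one root above sqrt 2 - 2 and two below, and the
   remaining eigenvalues -2 +- sqrt 2 and -1 are at most sqrt 2 - 2; since t >= 2,
   sqrt 2 - 2 is the second largest eigenvalue. *)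

From mathcomp Require Import all_boot all_order all_algebra.
From mathcomp Require Import zify ring lra polyrcf.
Set Implicit Arguments. Unset Strict Implicit. Unset Printing Implicit Defensive.
Import Order.TTheory GRing.Theory Num.Theory.

Lemma find_leq_iota d n : d < n -> find (leq d) (iota 0 n) = d.
Proof.
move=> lt_dn; have [m ->] : exists m, n = d + m.+1 by exists (n - d.+1); lia.
rewrite iotaD find_cat size_iota /= add0n leqnn addn0.
by case: hasP => // -[k]; rewrite mem_iota; lia.
Qed.

Definition Kst_dist (s u v : nat) : nat :=
  if u == v then 0 else if (u < s) && (v < s) then 1
  else if u < s then (if v == u + s then 1 else 2)
  else if v < s then (if u == v + s then 1 else 2) else 3.

Lemma Kst_adjE s t (u v : 'I_(s + t)) : Kst_adj s t u v = (Kst_dist s u v == 1).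
Proof. by rewrite /Kst_adj /Kst_dist -(inj_eq val_inj) /=; repeat case: ifP; lia. Qed.

Section KstDistance.
Variables s t : nat.
Hypothesis t_le_s : t <= s.

Lemma Kst_dist_triangle u v w : u < s + t -> v < s + t -> w < s + t ->
  Kst_dist s w v = 1 -> Kst_dist s u v <= Kst_dist s u w + 1.
Proof. by rewrite /Kst_dist; repeat case: ifP; lia. Qed.

Lemma Kst_dist_last_step u v : u < s + t -> v < s + t -> 0 < Kst_dist s u v ->
  exists2 w, w < s + t &
    Kst_dist s u w = (Kst_dist s u v).-1 /\ Kst_dist s w v = 1.
Proof.
move=> ltu ltv pos.
exists (if Kst_dist s u v == 1 then u else if v < s then u - s else v - s);
  move: ltu ltv pos; rewrite /Kst_dist; repeat case: ifP => /=; move=> *; try split; lia.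
Qed.

Lemma reach_Kst k (u v : 'I_(s + t)) :
  reach (Kst_adj s t) k u v = (Kst_dist s u v <= k).
Proof.
elim: k v => [|k IH] v /=.
  by rewrite /Kst_dist -(inj_eq val_inj) /=; repeat case: ifP; lia.
rewrite IH; apply/idP/idP.
  case/orP=> [|/existsP[w]]; first lia.
  rewrite IH Kst_adjE => /andP[uw /eqP wv].
  by have := Kst_dist_triangle (ltn_ord u) (ltn_ord v) (ltn_ord w) wv; lia.
move=> uv; case: (leqP (Kst_dist s u v) k) => [//|kuv]; apply/orP; right.
have [w ltw [uw wv]] :=
  Kst_dist_last_step (ltn_ord u) (ltn_ord v) (leq_ltn_trans (leq0n k) kuv).
by apply/existsP; exists (Ordinal ltw); rewrite IH Kst_adjE /= uw wv eqxx; lia.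
Qed.

End KstDistance.

Lemma gdist_Kst s t (u v : 'I_(s + t)) : 2 <= t <= s ->
  gdist (Kst_adj s t) u v = Kst_dist s u v.
Proof.
move=> /andP[t_ge2 t_le_s]; rewrite /gdist card_ord.
rewrite (eq_find (a2 := leq (Kst_dist s u v))) => [|k]; last exact: reach_Kst.
by apply: find_leq_iota; rewrite /Kst_dist; repeat case: ifP; lia.
Qed.

Local Open Scope ring_scope.

Local Notation J m n := (const_mx 1 : 'M_(m, n)).

Section ComRingMatrices.
Variable R : comNzRingType.

Lemma mul_const1_mx m n p : J m n *m J n p = n%:R *: J m p :> 'M[R]_(m, p).
Proof.
apply/matrixP => i j; rewrite !mxE (eq_bigr (fun _ => 1)) ?sumr_const ?card_ord.
  by rewrite mulr1.
by move=> k _; rewrite !mxE mulr1.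
Qed.

Lemma mul_pid_const1_mx s t p : (t <= s)%N ->
  (pid_mx t : 'M[R]_(t, s)) *m J s p = J t p.
Proof.
move=> ts; apply/matrixP => i j; rewrite !mxE.
rewrite (bigD1 (widen_ord ts i)) //= big1 ?addr0 => [|k ne_ki].
  by rewrite !mxE eqxx ltn_ord mulr1.
rewrite !mxE; case: eqP => [ik|_]; last by rewrite mul0r.
by case/eqP: ne_ki; apply: val_inj; rewrite /= ik.
Qed.

Lemma mul_const1_pid_mx s t p : (t <= s)%N ->
  J p s *m (pid_mx t : 'M[R]_(s, t)) = J p t.
Proof.
move=> ts; apply: trmx_inj; rewrite trmx_mul tr_pid_mx !trmx_const.
exact: mul_pid_const1_mx.
Qed.

Lemma mul_scalar_const_mx m (u1 v1 u2 v2 : R) :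
  (u1%:M + v1 *: J m m) *m (u2%:M + v2 *: J m m) =
  (u1 * u2)%:M + (u1 * v2 + v1 * u2 + v1 * v2 * m%:R) *: J m m.
Proof.
rewrite mulmxDl !mulmxDr !mul_scalar_mx mul_mx_scalar -scalemxAl -scalemxAr.
rewrite mul_const1_mx scalar_mxM -scalemx1 !scalerA !scalerDl scalemx1 !addrA.
by rewrite mul_scalar_mx (mulrC v1 u2).
Qed.

Lemma mul_pid_const_sandwich s t (c u w : R) : (t <= s)%N ->
  (pid_mx t + c *: J t s) *m (u%:M + w *: J s s) *m (pid_mx t + c *: J s t) =
  u%:M + (u * c + (w + c * u + c * w * s%:R) * (1 + c * s%:R)) *: J t t.
Proof.
move=> ts; set w' := w + c * u + c * w * s%:R.
have -> : (pid_mx t + c *: J t s) *m (u%:M + w *: J s s) =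
          u *: pid_mx t + w' *: J t s.
  rewrite mulmxDl !mulmxDr mul_mx_scalar -!scalemxAr mul_pid_const1_mx //.
  rewrite -!scalemxAl mul_const1_mx mul_mx_scalar !scalerA !scalerDl !addrA.
  by rewrite (mulrC w c).
rewrite mulmxDl !mulmxDr -!scalemxAl -!scalemxAr mul_pid_mx minnn.
rewrite (minn_idPr ts) pid_mx_1 mul_pid_const1_mx // mul_const1_pid_mx //.
rewrite mul_const1_mx !scalerA scalemx1 -!addrA; congr (_ + _).
by rewrite -!scalerDl; congr (_ *: _); ring.
Qed.

Lemma det1B_mulmxC m k (U : 'M[R]_(m, k)) (V : 'M[R]_(k, m)) :
  \det (1%:M - U *m V) = \det (1%:M - V *m U).
Proof.
have lower : block_mx 1%:M U V 1%:M =
    block_mx 1%:M 0 V 1%:M *m block_mx 1%:M U 0 (1%:M - V *m U).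
  by rewrite mulmx_block ?mul1mx ?mul0mx ?mulmx1 ?mulmx0 ?addr0 addrC subrK.
have upper : block_mx 1%:M U V 1%:M =
    block_mx (1%:M - U *m V) U 0 1%:M *m block_mx 1%:M 0 V 1%:M.
  by rewrite mulmx_block ?mul1mx ?mul0mx ?mulmx1 ?mulmx0 ?addr0 ?add0r subrK.
have := congr1 determinant lower; rewrite upper !det_mulmx ?det_ublock ?det_lblock.
by rewrite !det1 ?mul1r ?mulr1 => ->.
Qed.

Lemma det_block_schur m n (A Ai : 'M[R]_m) (B : 'M[R]_(m, n)) C (D : 'M[R]_n) :
  A *m Ai = 1%:M -> \det (block_mx A B C D) = \det A * \det (D - C *m Ai *m B).
Proof.
move=> AAi; have -> : block_mx A B C D =
    block_mx A 0 C 1%:M *m block_mx 1%:M (Ai *m B) 0 (D - C *m Ai *m B).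
  rewrite mulmx_block ?mulmx1 ?mul0mx ?mulmx0 ?addr0 ?add0r ?mul1mx.
  by rewrite mulmxA AAi mul1mx -mulmxA addrC subrK.
by rewrite det_mulmx det_lblock det_ublock !det1 mulr1 mul1r.
Qed.

End ComRingMatrices.

Lemma det_scalar_const_mx (F : fieldType) m (u v : F) : u != 0 ->
  \det (u%:M + v *: J m m) = u ^+ m * (1 + m%:R * v / u).
Proof.
move=> u0; have -> : u%:M + v *: J m m = u *: (1%:M - (- (v / u) *: J m 1) *m J 1 m).
  rewrite -scalemxAl mul_const1_mx scale1r scalerBr scalemx1 scalerA mulrN scaleNr.
  by rewrite opprK mulrC divfK.
rewrite detZ det1B_mulmxC det_mx11 -scalemxAr mul_const1_mx !mxE /=.
by congr (_ * _); rewrite mulr1n mulr1 mulNr opprK [_ * m%:R]mulrC mulrA.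
Qed.

Lemma horner_char_poly (R : comNzRingType) n (A : 'M[R]_n) (x : R) :
  (char_poly A).[x] = \det (x%:M - A).
Proof.
rewrite /char_poly -horner_evalE -det_map_mx; congr (\det _).
apply/matrixP => i j; rewrite !mxE /horner_eval.
by rewrite rmorphB rmorphMn /= !horner_evalE hornerX hornerC.
Qed.

Lemma eq_poly_on_natr (R : numDomainType) (p q : {poly R}) (c : R) :
  (forall k : nat, p.[c + k%:R] = q.[c + k%:R]) -> p = q.
Proof.
move=> pq; apply/eqP; rewrite -subr_eq0; apply/eqP.
apply: (@roots_geq_poly_eq0 _ _ [seq c + k%:R | k <- iota 0 (size (p - q))]).
- by apply/allP => _ /mapP[k _ ->]; rewrite /root hornerD hornerN pq subrr.
- by rewrite map_inj_uniq ?iota_uniq // => m n /addrI /eqP; rewrite eqr_nat => /eqP.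
- by rewrite size_map size_iota.
Qed.

Lemma sort_ge_cons d (T : orderType d) (x : T) (s : seq T) :
  all (fun y => (y <= x)%O) s -> sort >=%O (x :: s) = x :: sort >=%O s.
Proof.
move=> le_s_x; apply: (sorted_eq ge_trans ge_anti).
- by apply: sort_sorted => a b; exact: le_total.
- rewrite /= (path_sortedE ge_trans) all_sort le_s_x /=.
  by apply: sort_sorted => a b; exact: le_total.
- by rewrite perm_sort perm_cons perm_sym perm_sort.
Qed.

Lemma eigen_seq_unique (R : numFieldType) n (A : 'M[R]_n) (r1 r2 : seq R) :
  eigen_seq A r1 -> eigen_seq A r2 -> r1 = r2.
Proof.
move=> [sorted1 char1] [sorted2 char2]; apply: (sorted_eq ge_trans ge_anti) => //.
by apply: prod_XsubC_eq; rewrite -char1 -char2.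
Qed.

Lemma eigen_seq_sort (R : realDomainType) n (A : 'M[R]_n) (r : seq R) :
  char_poly A = \prod_(x <- r) ('X - x%:P) -> eigen_seq A (sort >=%R r).
Proof.
move=> charA; split; first by apply: sort_sorted => a b; exact: le_total.
by rewrite charA; apply: perm_big; rewrite perm_sym perm_sort.
Qed.

Lemma monic_cubic_interlaced_roots (R : rcfType) (p : {poly R}) (a b c d : R) :
    size p = 4%N -> p \is monic -> a <= b -> b <= c -> c <= d ->
    p.[a] < 0 -> 0 < p.[b] -> p.[c] < 0 -> 0 < p.[d] ->
  exists r1 r2 r3, [/\ c < r1 < d, b < r2 < c, a < r3 < b &
    p = \prod_(z <- [:: r1; r2; r3]) ('X - z%:P)].
Proof.
move=> size_p mon_p ab bc cd pa pb pc pd.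
have [r3] : {x | x \in `]a, b[ & root p x} by apply: poly_ivtoo; rewrite ?nmulr_rlt0.
rewrite in_itv /= => r3_ab root3.
have [r2] : {x | x \in `]b, c[ & root p x} by apply: poly_ivtoo; rewrite ?pmulr_rlt0.
rewrite in_itv /= => r2_bc root2.
have [r1] : {x | x \in `]c, d[ & root p x} by apply: poly_ivtoo; rewrite ?nmulr_rlt0.
rewrite in_itv /= => r1_cd root1.
exists r1, r2, r3; split => //.
rewrite [LHS](@all_roots_prod_XsubC _ _ [:: r1; r2; r3]) ?size_p //.
- by rewrite (monicP mon_p) scale1r.
- by rewrite /= root1 root2 root3.
by rewrite uniq_rootsE /= !inE !negb_or !gt_eqF //; lra.
Qed.

Lemma dist_mx_Kst (R : comNzRingType) s t : (2 <= t <= s)%N ->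
  dist_mx_ord R (Kst_adj s t) =
  block_mx (J s s - 1%:M) (2%:R *: J s t - pid_mx t)
           (2%:R *: J t s - pid_mx t) (3%:R *: J t t - 3%:R%:M).
Proof.
move=> hts; apply/matrixP => u v; rewrite mxE gdist_Kst //.
rewrite -[u]splitK -[v]splitK; case: (split u) => i; case: (split v) => j.
all: rewrite ?block_mxEul ?block_mxEur ?block_mxEdl ?block_mxEdr !mxE /Kst_dist /=.
all: rewrite -?val_eqE /= ?eqn_add2l.
all: have := ltn_ord i; have := ltn_ord j; case/andP: hts => _ ts.
all: case: (nat_of_ord i =P j); case: (ltnP i t).
all: repeat case: ifP; try lia; move=> *; rewrite /= ?mulr1n ?mulr0n; ring.
Qed.

Definition Kst_cubic (R : nzRingType) (s t : R) : {poly R} :=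
  Poly [:: 2 - 2 * s - s * t; 6 - 4 * s - 2 * t - s * t; 5 - s - 3 * t; 1].

Lemma horner_Kst_cubic (R : comNzRingType) (s t y : R) :
  (Kst_cubic s t).[y] = y ^+ 3 + (5 - s - 3 * t) * y ^+ 2
                        + (6 - 4 * s - 2 * t - s * t) * y + (2 - 2 * s - s * t).
Proof. by rewrite horner_Poly /=; ring. Qed.

Lemma size_Kst_cubic (R : nzRingType) (s t : R) : size (Kst_cubic s t) = 4%N.
Proof. by rewrite /Kst_cubic (PolyK (c := 0)) //= oner_neq0. Qed.

Lemma Kst_cubic_monic (R : nzRingType) (s t : R) : Kst_cubic s t \is monic.
Proof.
by rewrite monicE /lead_coef size_Kst_cubic /Kst_cubic (PolyK (c := 0)) //= oner_neq0.
Qed.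

Lemma det_sub_dist_Kst (F : fieldType) s t (x : F) : (2 <= t < s)%N ->
    x + 1 != 0 -> x + 1 != s%:R -> x ^+ 2 + 4 * x + 2 != 0 ->
  \det (x%:M - dist_mx_ord F (Kst_adj s t)) =
  (x ^+ 2 + 4 * x + 2) ^+ t.-1 * (x + 1) ^+ (s - t).-1 * (Kst_cubic s%:R t%:R).[x].
Proof.
move=> hts x1_neq0 x1_neq_s q_neq0; have ts : (t <= s)%N by lia.
rewrite dist_mx_Kst; last by lia.
rewrite (scalar_mx_block s t) opp_block_mx add_block_mx.
set k := ((x + 1) * (x + 1 - s%:R))^-1.
have -> : x%:M + - (J s s - 1%:M) = (x + 1)%:M + (-1) *: J s s :> 'M[F]_s.
  by apply/matrixP => i j; rewrite !mxE; case: (i == j); rewrite /=; ring.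
have -> : 0 + - (2%:R *: J s t - pid_mx t) = pid_mx t + (-2) *: J s t :> 'M[F]_(s, t).
  by apply/matrixP => i j; rewrite !mxE; ring.
have -> : 0 + - (2%:R *: J t s - pid_mx t) = pid_mx t + (-2) *: J t s :> 'M[F]_(t, s).
  by apply/matrixP => i j; rewrite !mxE; ring.
have -> : x%:M + - (3%:R *: J t t - 3%:R%:M) = (x + 3)%:M + (-3) *: J t t :> 'M[F]_t.
  by apply/matrixP => i j; rewrite !mxE; case: (i == j); rewrite /=; ring.
have Ainv : ((x + 1)%:M + (-1) *: J s s) *m ((x + 1)^-1%:M + k *: J s s) = 1%:M.
  rewrite mul_scalar_const_mx divff // [X in X *: _](_ : _ = 0) ?scale0r ?addr0 //.
  by rewrite /k; field; rewrite subr_eq0 ?x1_neq0 ?x1_neq_s.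
rewrite (det_block_schur _ _ _ Ainv) mul_pid_const_sandwich //.
set c := _ + _ * _.
have -> : (x + 3)%:M + (-3) *: J t t - ((x + 1)^-1%:M + c *: J t t) =
          (x + 3 - (x + 1)^-1)%:M + (-3 - c) *: J t t.
  by apply/matrixP => i j; rewrite !mxE; case: (i == j); rewrite /=; ring.
have qE : x ^+ 2 + 4 * x + 2 = (x + 3 - (x + 1)^-1) * (x + 1) by field.
have schur_neq0 : x + 3 - (x + 1)^-1 != 0.
  by apply: contraNneq q_neq0; rewrite qE => ->; rewrite mul0r.
rewrite !det_scalar_const_mx // horner_Kst_cubic /c /k qE exprMn.
have [t1 [s1 [-> Es]]] : exists t1 s1, t = t1.+1 /\ s = (s1 + t1 + 2)%N.
  by exists t.-1, (s - t - 1)%N; lia.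
rewrite Es in x1_neq_s *; have -> : ((s1 + t1 + 2) - t1.+1).-1 = s1 by lia.
move: x1_neq_s; rewrite /= !natrD !exprD !exprS => x1_neq_s.
rewrite -!natr1; field.
have -> : (x + 3) * (x + 1) - 1 = x ^+ 2 + 4 * x + 2 by ring.
by rewrite x1_neq0 q_neq0 subr_eq0 x1_neq_s.
Qed.

Lemma Kst_cubic_at_m1 (R : comNzRingType) (s t : R) : (Kst_cubic s t).[-1] = s - t.
Proof. by rewrite horner_Kst_cubic; ring. Qed.

Lemma Kst_cubic_sqrt2_lt0 (R : rcfType) (s t : R) : 3 <= s -> 2 <= t ->
  (Kst_cubic s t).[Num.sqrt 2 - 2] < 0.
Proof.
move=> s_ge3 t_ge2.
have := sqrtr_ge0 (2 : R); have := @sqr_sqrtr R 2 (ler0n _ 2).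
move: (Num.sqrt 2 : R) => r r_sq r_ge0.
have -> : (Kst_cubic s t).[r - 2] = (r ^+ 2 - 2) * (r + (5 - s - 3 * t) - 6) +
                                     t * ((10 - s) * r - 14 + s).
  by rewrite horner_Kst_cubic; ring.
rewrite r_sq subrr mul0r add0r.
have r_gt1 : 1 < r by nra.
have r_lt : r < 3/2 by nra.
have s_r : 3 * (r - 1) <= s * (r - 1) by apply: ler_wpM2r; lra.
have : (10 - s) * r - 14 + s < 0 by lra.
nra.
Qed.

Lemma Kst_cubic_low_lt0 (R : rcfType) (s t : R) : 3 <= s -> 2 <= t ->
  (Kst_cubic s t).[- (s * t + 4 * s + 2 * t)] < 0.
Proof.
move=> s_ge3 t_ge2; set M := s * t + 4 * s + 2 * t.
have -> : (Kst_cubic s t).[- M] =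
    - M ^+ 3 + (6 - s - 3 * t) * M ^+ 2 - 6 * M + (2 - 2 * s - s * t).
  by rewrite horner_Kst_cubic /M; ring.
have st_gt0 : 0 < s * t by apply: mulr_gt0; lra.
have M_gt0 : 0 < M by rewrite /M; lra.
have : 0 < M ^+ 3 by apply: exprn_gt0.
have : (6 - s - 3 * t) * M ^+ 2 <= 0 by apply: mulr_le0_ge0; rewrite ?sqr_ge0; lra.
lra.
Qed.

Lemma Kst_cubic_high_gt0 (R : rcfType) (s t : R) : 3 <= s -> 2 <= t ->
  0 < (Kst_cubic s t).[s * t + 4 * s + 3 * t].
Proof.
move=> s_ge3 t_ge2; set K := s * t + 4 * s + 3 * t.
have -> : (Kst_cubic s t).[K] =
    K ^+ 2 * (s * t + 3 * s + 4) + (6 + t) * K + (2 - 2 * s - s * t).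
  by rewrite horner_Kst_cubic /K; ring.
have st_gt0 : 0 < s * t by apply: mulr_gt0; lra.
have K_ge1 : 1 <= K by rewrite /K; lra.
have : K <= K ^+ 2 by rewrite expr2 ler_peMr //; lra.
have : K ^+ 2 <= K ^+ 2 * (s * t + 3 * s + 4) by rewrite ler_peMr ?sqr_ge0 //; lra.
have : 0 <= (6 + t) * K by apply: mulr_ge0; lra.
rewrite /K; lra.
Qed.

Lemma sqrt2_bounds (R : rcfType) : 1 < Num.sqrt (2 : R) < 2.
Proof.
have := sqrtr_ge0 (2 : R); have := @sqr_sqrtr R 2 (ler0n _ 2).
by move: (Num.sqrt 2 : R) => r r_sq r_ge0; apply/andP; split; nra.
Qed.

Lemma Kst_cubic_roots (R : rcfType) (s t : R) : 3 <= s -> 2 <= t -> t < s ->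
  exists r1 r2 r3,
  [/\ Num.sqrt 2 - 2 < r1, r2 < Num.sqrt 2 - 2, r3 < Num.sqrt 2 - 2 &
      Kst_cubic s t = \prod_(z <- [:: r1; r2; r3]) ('X - z%:P)].
Proof.
move=> s_ge3 t_ge2 t_lt_s; have /andP[sqrt2_gt1 sqrt2_lt2] := sqrt2_bounds R.
have st_gt0 : 0 < s * t by apply: mulr_gt0; lra.
have [||||r1 [r2 [r3 [/andP[r1_gt _] /andP[_ r2_lt] /andP[_ r3_lt] ->]]]] :=
  @monic_cubic_interlaced_roots _ _ _ (-1) _ _ (size_Kst_cubic s t) (Kst_cubic_monic s t)
    _ _ _ (Kst_cubic_low_lt0 s_ge3 t_ge2) _ (Kst_cubic_sqrt2_lt0 s_ge3 t_ge2)
    (Kst_cubic_high_gt0 s_ge3 t_ge2).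
- lra.
- lra.
- lra.
- by rewrite Kst_cubic_at_m1 subr_gt0.
exists r1, r2, r3; split => //; lra.
Qed.

Lemma char_poly_dist_Kst (R : rcfType) s t : (2 <= t < s)%N ->
  exists r1 rest, [/\ Num.sqrt 2 - 2 < r1, all (fun x => x <= Num.sqrt 2 - 2) rest &
    char_poly (dist_mx_ord R (Kst_adj s t)) =
    \prod_(x <- r1 :: Num.sqrt 2 - 2 :: rest) ('X - x%:P)].
Proof.
move=> hts; have /andP[sqrt2_gt1 _] := sqrt2_bounds R.
have s_ge3 : 3 <= s%:R :> R by rewrite (ler_nat R 3); lia.
have t_ge2 : 2 <= t%:R :> R by rewrite (ler_nat R 2); lia.
have t_lt_s : t%:R < s%:R :> R by rewrite ltr_nat; lia.
have [r1 [r2 [r3 [r1_gt r2_lt r3_lt cubicE]]]] := Kst_cubic_roots s_ge3 t_ge2 t_lt_s.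
exists r1, (nseq t.-2 (Num.sqrt 2 - 2) ++ nseq t.-1 (- Num.sqrt 2 - 2) ++
            nseq (s - t).-1 (-1) ++ [:: r2; r3]); split => //.
  have h1 : - Num.sqrt 2 - 2 <= Num.sqrt 2 - 2 :> R by lra.
  have h2 : -1 <= Num.sqrt 2 - 2 :> R by lra.
  by rewrite !all_cat !all_nseq /= lexx h1 h2 !ltW // !orbT.
apply: (eq_poly_on_natr (c := s%:R + 1)) => k.
have k_ge0 : 0 <= k%:R :> R := ler0n _ _.
set y := s%:R + 1 + k%:R.
rewrite horner_char_poly det_sub_dist_Kst //; first last.
- by rewrite gt_eqF // /y; nra.
- by rewrite gt_eqF // /y; lra.
- by rewrite gt_eqF // /y; lra.
rewrite cubicE !horner_prod !big_cons !big_cat !big_nseq !big_cons !big_nil.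
rewrite !iter_mulr_1 !hornerXsubC.
have -> : y ^+ 2 + 4 * y + 2 = (y - (Num.sqrt 2 - 2)) * (y - (- Num.sqrt 2 - 2)).
  transitivity (y ^+ 2 + 4 * y + 4 - Num.sqrt 2 ^+ 2); last by ring.
  by rewrite sqr_sqrtr ?ler0n //; ring.
have [t2 ->] : exists t2, t = t2.+2 by exists t.-2; lia.
by rewrite /= exprMn !exprS opprK; ring.
Qed.

Theorem corollary3p2 (R : rcfType) (s t : nat) :
  (3 <= t + 1 <= s)%N ->
  (exists r : seq R, eigen_seq (dist_mx_ord R (Kst_adj s t)) r) /\
  (forall r : seq R, eigen_seq (dist_mx_ord R (Kst_adj s t)) r ->
     r`_1 = Num.sqrt 2 - 2).
Proof.
move=> hst; have hts : (2 <= t < s)%N by lia.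
have [r1 [rest [r1_gt rest_le charE]]] := @char_poly_dist_Kst R s t hts.
have eigenL := eigen_seq_sort charE.
split=> [|r /eigen_seq_unique/(_ eigenL) ->]; first by eexists; exact: eigenL.
have rest_le_r1 : all (fun x => x <= r1) rest.
  by apply/allP => x /(allP rest_le) /le_lt_trans/(_ r1_gt)/ltW.
by rewrite sort_ge_cons ?sort_ge_cons //= ltW.
Qed.
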